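(* Let $M\ge2$ and consider a hierarchical system as described in the context. For $l\in\{1,\dots,M\}$ let $L^{(l)}_e=K^{(l)}L^{(l)}_D$. Then $\lambda(L^{(l)}_e)=\lambda(L^{(l)})\subset\mathbb{R}$; in particular $\lambda(L^{(l)})$ is the same for every choice of the stochastic row vectors $C^{(m)}_p$. Moreover, with $L=\sum_{l=1}^ML^{(l)}$, \[ \lambda(L)=\{0\}\cup\big(\lambda(L^{(1)}_e)\setminus\{0\}\big)\cup\cdots\cup\big(\lambda(L^{(M)}_e)\setminus\{0\}\big). \]
   Context: Hierarchical structure. Fix an integer $M\ge 2$ and positive integers $N^{(1)},\dots,N^{(M)}$; set $N^{(M+1)}:=1$. For each $l\in\{1,\dots,M\}$ the $N^{(l)}$ nodes of layer $l$ are partitioned into $N^{(l+1)}$ groups $G^{(l)}_1,\dots,G^{(l)}_{N^{(l+1)}}$ of sizes $k^{(l)}_p\ge1$ (so $\sum_pk^{(l)}_p=N^{(l)}$), numbered consecutively: group $G^{(l)}_p$ consists of nodes $\sum_{m<p}k^{(l)}_m+1,\dots,\sum_{m\le p}k^{(l)}_m$ of layer $l$. Each group $G^{(l)}_p$ carries a connected undirected graph with binary adjacency matrix; $L^{(l)}_p$ is its Laplacian (degree matrix minus adjacency matrix), and $L^{(l)}_D=\mathrm{diag}(L^{(l)}_1,\dots,L^{(l)}_{N^{(l+1)}})$ (block diagonal). Weights: positive constants $a_1,\dots,a_{N^{(1)}}$; $a^{(1)}_i=a_i$, $a^{(l+1)}_p=\sum_{i\in G^{(l)}_p}a^{(l)}_i$;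 $K^{(l)}=\mathrm{diag}(a^{(l)}_1,\dots,a^{(l)}_{N^{(l)}})^{-1}$. For $l=1,\dots,M-1$: $B^{(l)}=\mathrm{diag}(\mathbf{1}_{k^{(l)}_1},\dots,\mathbf{1}_{k^{(l)}_{N^{(l+1)}}})\in\mathbb{R}^{N^{(l)}\times N^{(l+1)}}$ ($\mathbf 1_k$ all-ones column vector), $C^{(l)}=\mathrm{diag}(C^{(l)}_1,\dots,C^{(l)}_{N^{(l+1)}})\in\mathbb{R}^{N^{(l+1)}\times N^{(l)}}$ with each $C^{(l)}_p\in\mathbb{R}^{1\times k^{(l)}_p}$ having nonnegative entries summing to $1$. $L^{(1)}=K^{(1)}L^{(1)}_D$ and $L^{(l)}=B^{(1)}\cdots B^{(l-1)}K^{(l)}L^{(l)}_DC^{(l-1)}\cdots C^{(1)}$ for $l=2,\dots,M$. $\lambda(A)$ is the set of (distinct) eigenvalues of $A$. *)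

(* Layers are indexed from 0 (paper's layer l = our layer l-1). *)
From HB Require Import structures.
From mathcomp Require Import all_boot all_order all_algebra.
From mathcomp Require Import complex.
Unset Implicit Arguments.
 Unset Strict Implicit. Unset Printing Implicit Defensive.
Import Order.TTheory GRing.Theory Num.Theory.
Local Open Scope ring_scope.

Section Hier.
Variable R : rcfType.
Variable N : nat -> nat.

(* Partition of layer-l nodes into groups indexed by layer-(l+1) nodes:
   node i belongs to group g i. Consecutive numbering = g nondecreasing;
   all groups nonempty = g surjective. *)
Definition hier_groups (l : nat) (g : 'I_(N l) -> 'I_(N l.+1)) : Prop :=
  (forall i j : 'I_(N l), (i <= j)%N -> (g i <= g j)%N) /\
  (forall p : 'I_(N l.+1), exists i, g i = p).

Definition group_graph (l : nat) (g : 'I_(N l) -> 'I_(N l.+1))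
    (A : 'M[R]_(N l)) : Prop :=
  [/\ (forall i j, A i j = 0 \/ A i j = 1),
      A^T = A,
      (forall i, A i i = 0),
      (forall i j, A i j != 0 -> g i = g j)
    & (forall i j, g i = g j -> connect (fun x y => A x y != 0) i j)].

(* Laplacian (degree matrix minus adjacency); for A as above this is the
   block-diagonal matrix L_D = diag(L_1, ..., L_{N(l+1)}). *)
Definition laplacian {n} (A : 'M[R]_n) : 'M[R]_n :=
  diag_mx (\row_i \sum_j A i j) - A.

Definition stoch_sel (l : nat) (g : 'I_(N l) -> 'I_(N l.+1))
    (C : 'M[R]_(N l.+1, N l)) : Prop :=
  [/\ (forall p i, 0 <= C p i),
      (forall p i, C p i != 0 -> g i = p)
    & (forall p, \sum_(i | g i == p) C p i = 1)].

Variable g : forall (l : nat), 'I_(N l) -> 'I_(N l.+1).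
Variable a : 'I_(N 0) -> R.

Fixpoint wt (l : nat) : 'I_(N l) -> R :=
  match l with
  | 0 => a
  | l'.+1 => fun p => \sum_(i | g l' i == p) wt l' i
  end.

Definition Kmx (l : nat) : 'M[R]_(N l) := invmx (diag_mx (\row_i wt l i)).

Definition Bmx (l : nat) : 'M[R]_(N l, N l.+1) :=
  \matrix_(i, p) (g l i == p)%:R.

Fixpoint Bprod (l : nat) : 'M[R]_(N 0, N l) :=
  match l with
  | 0 => 1%:M
  | l'.+1 => Bprod l' *m Bmx l'
  end.

Variable A : forall (l : nat), 'M[R]_(N l).

Definition Le (l : nat) : 'M[R]_(N l) := Kmx l *m laplacian (A l).

Variable Cm : forall (l : nat), 'M[R]_(N l.+1, N l).

Fixpoint Cprod (l : nat) : 'M[R]_(N l, N 0) :=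
  match l with
  | 0 => 1%:M
  | l'.+1 => Cm l' *m Cprod l'
  end.

Definition Llay (l : nat) : 'M[R]_(N 0) := Bprod l *m Le l *m Cprod l.

Definition Ltot (M : nat) : 'M[R]_(N 0) := \sum_(l < M) Llay l.

End Hier.

Definition ceig (R : rcfType) n (X : 'M[R]_n) (z : R[i]) : bool :=
  eigenvalue (map_mx (fun x : R => (x%:C)%C) X) z.

Arguments hier_groups {N} l g.
Arguments group_graph {R N} l g A.
Arguments stoch_sel {R N} l g C.
Arguments wt {R N} g a l.
Arguments Kmx {R N} g a l.
Arguments Bmx {R N} g l.
Arguments Bprod {R N} g l.
Arguments Le {R N} g a A l.
Arguments Cprod {R N} Cm l.
Arguments Llay {R N} g a A Cm l.
Arguments Ltot {R N} g a A Cm M.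
Arguments ceig {R n} X z.

(* Write P_l = B^(1)...B^(l), Q_l = C^(l)...C^(1) and E_l = L_e^(l), so that
   L^(l) = P_l E_l Q_l.  Because the C_p are stochastic on their groups,
   Q_l P_l = I; because a group Laplacian kills constant vectors,
   E_l Q_l P_m = 0 for m > l; and the column spaces of the P_l decrease.
   Hence L^(l) and E_l = E_l Q_l P_l share their nonzero eigenvalues (XY versus
   YX), and both are singular.  The sum L is block triangular along the
   decreasing spaces: a left eigenvector u of L, taken at the deepest layer k
   with u P_k <> 0, yields the left eigenvector u P_k of E_k; conversely a left
   eigenvector y of E_l gives an eigenvector y Q_l of L modulo the L-stable left
   kernel of P_l.  Finally E_l = D^-1 S with D positive diagonal and S
   symmetric, so for x = u D^-1 the eigenvalue is x S x^* / x D x^*, a real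
   number. *)

From HB Require Import structures.
From mathcomp Require Import all_boot all_order all_algebra.
From mathcomp Require Import complex.
Import Order.TTheory GRing.Theory Num.Theory.
Local Open Scope ring_scope.
Set Implicit Arguments. Unset Strict Implicit. Unset Printing Implicit Defensive.

Section Eigenvalues.
Variable F : fieldType.

Lemma eigenvalue_unitmx n (X : 'M[F]_n) z : eigenvalue X z = (X - z%:M \notin unitmx).
Proof. by rewrite /eigenvalue /eigenspace kermx_eq0 row_free_unit. Qed.

Lemma eigenvalue0_mulmx_eq0 n m (X : 'M[F]_n) (Y : 'M[F]_(n, m)) :
  X *m Y = 0 -> Y != 0 -> eigenvalue X 0.
Proof.
move=> XY0 Y0; rewrite eigenvalue_unitmx raddf0 subr0.
by apply: contra Y0 => uX; rewrite -(mulKmx uX Y) XY0 mulmx0.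
Qed.

Lemma eigenvalue_mulmxC n m (X : 'M[F]_(n, m)) (Y : 'M[F]_(m, n)) z :
  z != 0 -> eigenvalue (X *m Y) z = eigenvalue (Y *m X) z.
Proof.
have swap p q (U : 'M[F]_(p, q)) (V : 'M[F]_(q, p)) :
    z != 0 -> eigenvalue (U *m V) z -> eigenvalue (V *m U) z.
  move=> z0 /eigenvalueP [u uUV u0]; apply/eigenvalueP; exists (u *m U).
    by rewrite mulmxA -(mulmxA u) uUV scalemxAl.
  apply: contra u0 => /eqP uU0.
  have : z *: u == 0 by rewrite -uUV mulmxA uU0 mul0mx.
  by rewrite scaler_eq0 (negPf z0).
by move=> z0; apply/idP/idP; apply: swap.
Qed.

(* [z] is an eigenvalue of the map induced by [L] on the quotient by [W]. *)
Lemma eigenvalue_stable_mod n m (L : 'M[F]_n) (W : 'M[F]_(m, n)) (u : 'rV[F]_n) z :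
  stablemx W L -> (u *m L - z *: u <= W)%MS -> ~~ (u <= W)%MS ->
  eigenvalue L z.
Proof.
move=> sWL uLW uW; rewrite eigenvalue_unitmx; apply: contra uW => uLz.
set T := L - z%:M in uLz.
have sWT : (W *m T <= W)%MS.
  by rewrite mulmxBr mul_mx_scalar addmx_sub ?eqmx_opp ?scalemx_sub.
have eWT : (W *m T == W)%MS.
  by rewrite -(mxrank_leqif_eq sWT) mxrankMfree // row_free_unit.
have : (u *m T <= W *m T)%MS by rewrite (eqmxP eWT) mulmxBr mul_mx_scalar.
by case/submxP => D uTD; rewrite -(mulmxK uLz u) uTD mulmxA mulmxK // submxMl.
Qed.

End Eigenvalues.

Section NestedSum.
Variables (F : fieldType) (N : nat -> nat) (M : nat).
Variables (P : forall l, 'M[F]_(N 0, N l)) (Q : forall l, 'M[F]_(N l, N 0)).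
Variable E : forall l, 'M[F]_(N l).
Hypothesis P0 : P 0 = 1%:M.
Hypothesis PM_neq0 : P M != 0.
Hypothesis QP : forall l, (l < M)%N -> Q l *m P l = 1%:M.
Hypothesis P_succ : forall l, (l < M)%N -> exists Y, P l.+1 = P l *m Y.
Hypothesis EQP_succ : forall l, (l < M)%N -> E l *m Q l *m P l.+1 = 0.

Definition nested_sum := \sum_(l < M) P l *m E l *m Q l.

Lemma P_chain l m : (l <= m)%N -> (m <= M)%N -> exists Y, P m = P l *m Y.
Proof.
elim: m => [|m IHm]; first by rewrite leqn0 => /eqP -> _; exists 1%:M; rewrite mulmx1.
rewrite leq_eqVlt ltnS => /orP [/eqP -> _ | lm mM]; first by exists 1%:M; rewrite mulmx1.
have [Y PY] := IHm lm (ltnW mM); have [Z ->] := P_succ mM.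
by exists (Y *m Z); rewrite PY mulmxA.
Qed.

Lemma EQP_eq0 l m : (l < m)%N -> (m <= M)%N -> E l *m Q l *m P m = 0.
Proof.
move=> lm mM; have [Y ->] := P_chain lm mM.
by rewrite mulmxA EQP_succ ?mul0mx // (leq_trans lm mM).
Qed.

Lemma eigenvalue_layerE l z :
  (l < M)%N -> eigenvalue (P l *m E l *m Q l) z = eigenvalue (E l) z.
Proof.
move=> lM; have [->|z0] := eqVneq z 0; last first.
  by rewrite -mulmxA eigenvalue_mulmxC // -mulmxA QP // mulmx1.
have [Y PMY] := P_chain (ltnW lM) (leqnn M).
have Y0 : Y != 0 by apply: contra PM_neq0; rewrite PMY => /eqP ->; rewrite mulmx0.
have QPM : Q l *m P M = Y by rewrite PMY mulmxA QP // mul1mx.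
apply/idP/idP => _.
- by apply: (eigenvalue0_mulmx_eq0 _ Y0); rewrite -QPM mulmxA EQP_eq0.
- apply: (eigenvalue0_mulmx_eq0 _ PM_neq0).
  by rewrite -!mulmxA (mulmxA (E l)) EQP_eq0 // mulmx0.
Qed.

Lemma mulmx_nested_sum_P p (w : 'M[F]_(p, N 0)) k : (k < M)%N ->
    (forall j, (k < j < M)%N -> w *m P j = 0) ->
  w *m nested_sum *m P k = w *m P k *m E k.
Proof.
move=> kM wP0; rewrite /nested_sum mulmx_sumr mulmx_suml (bigD1 (Ordinal kM)) //=.
rewrite big1 ?addr0; first by rewrite !mulmxA -(mulmxA _ (Q k)) QP // mulmx1.
move=> j /eqP jk; case: (ltngtP j k) => [jk'|kj|ejk].
- by rewrite -!mulmxA (mulmxA (E j)) EQP_eq0 ?mulmx0 // ltnW.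
- by rewrite !mulmxA wP0 ?kj ?ltn_ord // !mul0mx.
- by case: jk; apply: val_inj.
Qed.

Lemma stable_kermx_nested_sum l : (l < M)%N -> stablemx (kermx (P l)) nested_sum.
Proof.
move=> lM; have kerP0 := mulmx_ker (P l).
rewrite sub_kermx mulmx_nested_sum_P // ?kerP0 ?mul0mx //.
move=> j /andP [lj jM]; have [Y ->] := P_chain (ltnW lj) (ltnW jM).
by rewrite mulmxA kerP0 mul0mx.
Qed.

Lemma eigenvalue0_nested_sum : eigenvalue nested_sum 0.
Proof.
apply: (eigenvalue0_mulmx_eq0 _ PM_neq0); rewrite /nested_sum mulmx_suml big1 // => l _.
by rewrite -!mulmxA (mulmxA (E l)) EQP_eq0 // mulmx0.
Qed.

Lemma eigenvalue_nested_sum_layer l z : (l < M)%N -> z != 0 ->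
  eigenvalue (E l) z -> eigenvalue nested_sum z.
Proof.
move=> lM z0 /eigenvalueP [y yE y0].
have yQP j : (l < j < M)%N -> y *m Q l *m P j = 0.
  case/andP=> lj jM; have -> : y = z^-1 *: (y *m E l) by rewrite yE scalerA mulVf // scale1r.
  by rewrite -!scalemxAl -!mulmxA (mulmxA (E l)) EQP_eq0 ?mulmx0 ?scaler0 // ltnW.
apply: (@eigenvalue_stable_mod _ _ _ _ (kermx (P l)) (y *m Q l)).
- exact: stable_kermx_nested_sum.
- rewrite sub_kermx mulmxBl mulmx_nested_sum_P // -scalemxAl -(mulmxA y) QP //.
  by rewrite mulmx1 yE subrr.
- by rewrite sub_kermx -mulmxA QP // mulmx1.
Qed.

Lemma eigenvalue_nested_sum_exists_layer z : (0 < M)%N ->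
  eigenvalue nested_sum z -> exists2 l, (l < M)%N & eigenvalue (E l) z.
Proof.
move=> M_gt0 /eigenvalueP [u uL u0].
(* [k] is the deepest layer with [u *m P k != 0]: in [u *m nested_sum *m P k]
   deeper layers vanish on [u], shallower ones on [P k]. *)
pose nz k := (k < M)%N && (u *m P k != 0).
have nz0 : exists k, nz k by exists 0%N; rewrite /nz M_gt0 P0 mulmx1.
have nz_le k : nz k -> (k <= M)%N by case/andP => /ltnW.
case: (ex_maxnP nz0 nz_le) => k /andP [kM uPk] k_max.
exists k => //; apply/eigenvalueP; exists (u *m P k) => //.
rewrite -mulmx_nested_sum_P // ?uL -?scalemxAl // => j /andP [kj jM].
by apply/eqP; apply: contraTT kj => uPj; rewrite -leqNgt k_max // /nz jM.
Qed.

End NestedSum.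

Section RealSpectrum.
Variable R : rcfType.
Local Open Scope complex_scope.
Local Notation cplx := (map_mx (real_complex R)).

Definition herm_form n (S : 'M[R[i]]_n) (x : 'rV[R[i]]_n) : R[i] :=
  (x *m S *m (map_mx conjc x)^T) 0 0.

Lemma conjc_herm_form n (S : 'M[R]_n) x :
  S^T = S -> conjc (herm_form (cplx S) x) = herm_form (cplx S) x.
Proof.
move=> ST; rewrite /herm_form.
have -> (X : 'M[R[i]]_1) : conjc (X 0 0) = (map_mx conjc X) 0 0 by rewrite mxE.
rewrite !map_mxM -map_trmx -!map_mx_comp (eq_map_mx _ (@conjc_real R)).
rewrite [map_mx (_ \o _) x]map_mx_id; last exact: conjcK.
have trE (X : 'M[R[i]]_1) : X 0 0 = X^T 0 0 by rewrite mxE.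
by rewrite [RHS]trE !trmx_mul trmxK map_trmx ST mulmxA.
Qed.

Lemma herm_form_diag n (d : 'rV[R]_n) x :
  herm_form (cplx (diag_mx d)) x = \sum_i (d 0 i)%:C * (x 0 i * conjc (x 0 i)).
Proof.
rewrite /herm_form map_diag_mx mul_mx_diag mxE; apply: eq_bigr => i _.
by rewrite !mxE mulrAC mulrC.
Qed.

Lemma herm_form_diag_neq0 n (d : 'rV[R]_n) x :
  (forall i, 0 < d 0 i) -> x != 0 -> herm_form (cplx (diag_mx d)) x != 0.
Proof.
move=> d_gt0 /rV0Pn [j xj]; rewrite herm_form_diag.
have term_ge0 i : 0 <= (d 0 i)%:C * (x 0 i * conjc (x 0 i)).
  by rewrite mulr_ge0 ?mulcJ_ge0 // ler0c ltW.
apply/eqP => /(psumr_eq0P (fun i _ => term_ge0 i)) /(_ j isT) /eqP; apply/negP.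
by rewrite !mulf_neq0 ?conjc_eq0 // (inj_eq (@complexI R)) gt_eqF.
Qed.

Lemma conjc_fixed_real (z : R[i]) : conjc z = z -> exists r, z = r%:C.
Proof. by case: z => a b [] /eqP; rewrite eqNr => /eqP ->; exists a. Qed.

Lemma eigenvalue_invmx_mul_real n (D S : 'M[R]_n) z :
    D \in unitmx -> D^T = D -> S^T = S ->
    (forall x, x != 0 -> herm_form (cplx D) x != 0) ->
  eigenvalue (cplx (invmx D *m S)) z -> exists r, z = r%:C.
Proof.
move=> uD DT ST D_nondeg /eigenvalueP [u uKS u0].
(* [x S = z x D], so [z] is a quotient of two real Hermitian forms. *)
pose x := u *m cplx (invmx D).
have ux : u = x *m cplx D by rewrite -mulmxA -map_mxM mulVmx // map_mx1 mulmx1.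
have xS : x *m cplx S = z *: (x *m cplx D) by rewrite -ux -uKS map_mxM mulmxA.
have x0 : x != 0 by apply: contra u0 => /eqP x0; rewrite ux x0 mul0mx.
have Sz : herm_form (cplx S) x = z * herm_form (cplx D) x.
  by rewrite /herm_form xS -scalemxAl mxE.
apply: conjc_fixed_real; apply: (mulIf (D_nondeg _ x0)).
by rewrite -Sz -(conjc_herm_form x DT) -rmorphM -Sz; apply: conjc_herm_form.
Qed.

Lemma eigenvalue_diag_invmx_mul_real n (d : 'rV[R]_n) (S : 'M[R]_n) z :
    (forall i, 0 < d 0 i) -> S^T = S ->
  eigenvalue (cplx (invmx (diag_mx d) *m S)) z -> exists r, z = r%:C.
Proof.
move=> d_gt0 ST; apply: eigenvalue_invmx_mul_real => //.
- by rewrite unitmxE det_diag unitfE; apply/prodf_neq0 => i _; rewrite gt_eqF.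
- exact: tr_diag_mx.
- by move=> x; apply: herm_form_diag_neq0.
Qed.

End RealSpectrum.

Section Hierarchy.
Variables (R : rcfType) (M : nat) (N : nat -> nat).
Variable g : forall l, 'I_(N l) -> 'I_(N l.+1).
(* Otherwise [Set Implicit Arguments] would make the layer index implicit. *)
Arguments g : clear implicits.
Variable A : forall l, 'M[R]_(N l).
Variable a : 'I_(N 0) -> R.
Variable Cm : forall l, 'M[R]_(N l.+1, N l).
Hypothesis M_gt0 : (0 < M)%N.
Hypothesis N_top : N M = 1%N.
Hypothesis groups : forall l, (l < M)%N -> hier_groups l (g l).
Hypothesis graphs : forall l, (l < M)%N -> group_graph l (g l) (A l).
Hypothesis a_gt0 : forall i, 0 < a i.
Hypothesis C_stoch : forall l, (l.+1 < M)%N -> stoch_sel l (g l) (Cm l).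

Local Notation cplx := (map_mx (real_complex R)).

Lemma ceigE n (X : 'M[R]_n) z : ceig X z = eigenvalue (cplx X) z.
Proof. by []. Qed.

Lemma stoch_sel_mul_B l (C : 'M[R]_(N l.+1, N l)) :
  stoch_sel l (g l) C -> C *m Bmx g l = 1%:M.
Proof.
case=> _ C_supp C_sum; apply/matrixP => p q; rewrite !mxE.
rewrite (eq_bigr (fun i => if g l i == q then C p i else 0)); last first.
  by move=> i _; rewrite mxE; case: eqP; rewrite ?mulr1 ?mulr0.
rewrite -big_mkcond /=; case: eqP => [<-|pq]; first exact: C_sum.
rewrite big1 // => i /eqP giq; have [//|/C_supp gip] := eqVneq (C p i) 0.
by case: pq; rewrite -giq gip.
Qed.

Lemma Cprod_mul_Bprod l : (l < M)%N -> Cprod Cm l *m Bprod g l = 1%:M.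
Proof.
elim: l => [|l IHl] lM /=; first by rewrite mul1mx.
rewrite -mulmxA (mulmxA (Cprod Cm l)) IHl ?(ltn_trans _ lM) // mul1mx.
exact/stoch_sel_mul_B/C_stoch.
Qed.

Lemma laplacian_mul_B l (X : 'M[R]_(N l)) :
  group_graph l (g l) X -> laplacian _ X *m Bmx g l = 0.
Proof.
case=> _ _ _ X_in_groups _; apply/matrixP => i q.
rewrite /laplacian mulmxBl mul_diag_mx !mxE mulr_suml; apply/eqP; rewrite subr_eq0.
apply/eqP/eq_bigr => j _; rewrite mxE.
by have [->|/X_in_groups ->] := eqVneq (X i j) 0; rewrite ?mul0r.
Qed.

Lemma trmx_laplacian n (X : 'M[R]_n) : X^T = X -> (laplacian _ X)^T = laplacian _ X.
Proof. by move=> XT; rewrite /laplacian raddfB /= tr_diag_mx XT. Qed.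

Lemma Bprod_mul_ones l : Bprod g l *m const_mx 1 = const_mx 1 :> 'M[R]_(N 0, 1).
Proof.
elim: l => [|l IHl] /=; first by rewrite mul1mx.
rewrite -mulmxA -[RHS]IHl; congr (_ *m _); apply/matrixP => i k.
rewrite !mxE (bigD1 (g l i)) //= big1 ?addr0; first by rewrite !mxE eqxx mulr1.
by move=> p /negPf gip; rewrite !mxE eq_sym gip mul0r.
Qed.

Lemma N_gt0 l : (l <= M)%N -> (0 < N l)%N.
Proof.
have step k : (k < M)%N -> (0 < N k.+1)%N -> (0 < N k)%N.
  move=> kM Nk; have [_ /(_ (Ordinal Nk)) [i _]] := groups kM.
  exact: leq_ltn_trans (leq0n i) (ltn_ord i).
move=> lM; rewrite -(subKn lM); elim: (M - l)%N (leq_subr l M) => [|d IHd] dM.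
  by rewrite subn0 N_top.
apply: step; first by rewrite ltn_subrL (leq_ltn_trans _ dM).
by rewrite subnSK // IHd // ltnW.
Qed.

Lemma Bprod_top_neq0 : Bprod g M != 0 :> 'M[R]_(N 0, N M).
Proof.
apply/eqP => B0; have := Bprod_mul_ones M; rewrite B0 mul0mx => /matrixP h.
by have := h (Ordinal (N_gt0 (leq0n M))) 0; rewrite !mxE => /eqP; rewrite eq_sym oner_eq0.
Qed.

Lemma wt_gt0 l : (l <= M)%N -> forall i, 0 < wt g a l i.
Proof.
elim: l => [|l IHl] lM i /=; first exact: a_gt0.
have IH j : 0 < wt g a l j by apply: IHl; apply: ltnW.
have [_ /(_ i) [i0 <-]] := groups lM.
rewrite (bigD1 i0) //=; apply: ltr_wpDr (IH i0).
by apply: sumr_ge0 => j _; apply: ltW.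
Qed.

Lemma Le_eigenvalue_real l z : (l < M)%N -> ceig (Le g a A l) z -> exists r, z = (r%:C)%C.
Proof.
move=> lM; rewrite ceigE /Le /Kmx => ez; apply: (eigenvalue_diag_invmx_mul_real _ _ ez).
- by move=> i; rewrite mxE wt_gt0 // ltnW.
- by have [_ AT _ _ _] := graphs lM; apply: trmx_laplacian.
Qed.

Let P l := cplx (Bprod g l).
Let Q l := cplx (Cprod Cm l).
Let E l := cplx (Le g a A l).

Let P0 : P 0 = 1%:M. Proof. exact: map_mx1. Qed.

Let PM_neq0 : P M != 0. Proof. by rewrite map_mx_eq0 Bprod_top_neq0. Qed.

Let QP l : (l < M)%N -> Q l *m P l = 1%:M.
Proof. by move=> lM; rewrite -map_mxM Cprod_mul_Bprod // map_mx1. Qed.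

Let P_succ l : (l < M)%N -> exists Y, P l.+1 = P l *m Y.
Proof. by exists (cplx (Bmx g l)); rewrite -map_mxM. Qed.

Let EQP_succ l : (l < M)%N -> E l *m Q l *m P l.+1 = 0.
Proof.
move=> lM; rewrite -!map_mxM /= -mulmxA (mulmxA (Cprod Cm l)) Cprod_mul_Bprod //.
by rewrite mul1mx /Le -mulmxA (laplacian_mul_B (graphs lM)) mulmx0 map_mx0.
Qed.

Let cplx_Llay l : cplx (Llay g a A Cm l) = P l *m E l *m Q l.
Proof. by rewrite /Llay 2!map_mxM. Qed.

Lemma ceig_Llay l z : (l < M)%N -> ceig (Llay g a A Cm l) z = ceig (Le g a A l) z.
Proof.
by move=> lM; rewrite !ceigE cplx_Llay (eigenvalue_layerE PM_neq0 QP P_succ EQP_succ).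
Qed.

Lemma ceig_Ltot z : ceig (Ltot g a A Cm M) z <->
  z = 0 \/ exists2 l, (l < M)%N & z != 0 /\ ceig (Le g a A l) z.
Proof.
have -> : ceig (Ltot g a A Cm M) z = eigenvalue (nested_sum M P Q E) z.
  by rewrite ceigE raddf_sum (eq_bigr _ (fun (l : 'I_M) _ => cplx_Llay l)).
split=> [Lz | [->|[l lM [z0 Ez]]]].
- have [->|z0] := eqVneq z 0; [by left | right].
  have [l lM Ez] := eigenvalue_nested_sum_exists_layer P0 QP P_succ EQP_succ M_gt0 Lz.
  by exists l.
- exact: (eigenvalue0_nested_sum PM_neq0 P_succ EQP_succ).
- exact: (eigenvalue_nested_sum_layer QP P_succ EQP_succ lM z0 Ez).
Qed.

End Hierarchy.

Theorem theorem2 (R : rcfType) (M : nat) (N : nat -> nat)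
    (g : forall l, 'I_(N l) -> 'I_(N l.+1))
    (A : forall l, 'M[R]_(N l))
    (a : 'I_(N 0) -> R)
    (Cm : forall l, 'M[R]_(N l.+1, N l)) :
  (2 <= M)%N ->
  N M = 1%N ->
  (forall l, (l < M)%N -> hier_groups l (g l)) ->
  (forall l, (l < M)%N -> group_graph l (g l) (A l)) ->
  (forall i, 0 < a i) ->
  (forall l, (l.+1 < M)%N -> stoch_sel l (g l) (Cm l)) ->
  (forall l, (l < M)%N ->
     (forall z, ceig (Le g a A l) z <-> ceig (Llay g a A Cm l) z)
     /\ (forall z, ceig (Llay g a A Cm l) z -> exists r : R, z = (r%:C)%C)
     /\ (forall Cm' : forall l, 'M[R]_(N l.+1, N l),
           (forall l', (l'.+1 < M)%N -> stoch_sel l' (g l') (Cm' l')) ->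
           forall z, ceig (Llay g a A Cm l) z <-> ceig (Llay g a A Cm' l) z))
  /\ (forall z, ceig (Ltot g a A Cm M) z <->
        z = 0 \/ exists2 l, (l < M)%N & z != 0 /\ ceig (Le g a A l) z).
Proof.
move=> M_ge2 N_top groups graphs a_gt0 C_stoch.
split; last exact: ceig_Ltot (ltnW M_ge2) N_top groups graphs C_stoch.
move=> l lM; have Llay_Le := ceig_Llay a N_top groups graphs _ _ lM.
split; [by move=> z; rewrite Llay_Le | split].
- by move=> z; rewrite Llay_Le // => /(Le_eigenvalue_real groups graphs a_gt0 lM).
- by move=> Cm' C'_stoch z; rewrite !Llay_Le.
Qed.
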